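(* Let $\mathcal{P}$ be a profile of unrooted phylogenetic trees whose display graph $G(\mathcal{P})$ is connected (so $\mathrm{LG}(\mathcal{P})$ is connected). If $F$ is a minimal separator of $\mathrm{LG}(\mathcal{P})$, then $\mathrm{LG}(\mathcal{P})-F$ has exactly two connected components.
   Context: A phylogenetic tree is an unrooted tree whose leaves are bijectively labeled (leaves identified with labels; internal vertices have degree at least three). A profile $\mathcal{P}=\{T_1,\dots,T_k\}$ is a finite collection of phylogenetic trees; internal vertices of distinct trees are disjoint, while leaves with the same label are the same vertex. The display graph $G(\mathcal{P})$ has vertex set $\bigcup_i V(T_i)$ and edge set $\bigcup_i E(T_i)$. $\mathrm{LG}(\mathcal{P})$ is the line graph of $G(\mathcal{P})$ (vertices are edges of $G(\mathcal{P})$, adjacent iff they share an endpoint). In a graph $G$, for nonadjacent vertices $a,b$, an $a$-$b$ separator is $U\subset V(G)$ with $a,b$ in different components of $G-U$; it is minimal if no proper subset is an $a$-$b$ separator; a minimal separator is a minimal $a$-$b$ separator for some nonadjacent $a,b$. *)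

From mathcomp Require Import all_boot.
Set Implicit Arguments.
Unset Strict Implicit.
Unset Printing Implicit Defensive.

Section Graphs.
Variable T : finType.

Definition restr (D : {set T}) (r : rel T) : rel T :=
  [rel x y | [&& x \in D, y \in D & r x y]].

Definition gconnected (D : {set T}) (r : rel T) : Prop :=
  forall x y, x \in D -> y \in D -> connect (restr D r) x y.

Definition components (D : {set T}) (r : rel T) : {set {set T}} :=
  [set [set y in D | connect (restr D r) x y] | x in D].

Definition is_ab_separator (D : {set T}) (r : rel T) (a b : T) (U : {set T}) : Prop :=
  [/\ U \subset D, a \in D :\: U, b \in D :\: U &
      ~~ connect (restr (D :\: U) r) a b].

Definition is_min_ab_separator (D : {set T}) (r : rel T) (a b : T) (U : {set T}) : Prop :=
  is_ab_separator D r a b U /\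
  forall U' : {set T}, U' \proper U -> ~ is_ab_separator D r a b U'.

Definition is_min_separator (D : {set T}) (r : rel T) (U : {set T}) : Prop :=
  exists a b, [/\ a \in D, b \in D, a != b, ~~ r a b & is_min_ab_separator D r a b U].
End Graphs.

Section Trees.
Variable V : finType.

(* adjacency given by a set of edges (edges are 2-element vertex sets) *)
Definition tadj (E : {set {set V}}) : rel V :=
  [rel x y | (x != y) && ([set x; y] \in E)].

Definition tdeg (E : {set {set V}}) (v : V) : nat := #|[set u | tadj E v u]|.

Definition is_tree (VT : {set V}) (E : {set {set V}}) : Prop :=
  [/\ VT != set0,
      (forall e, e \in E -> exists u v, [/\ u \in VT, v \in VT, u != v & e = [set u; v]]),
      gconnected VT (tadj E) &
      (forall c : seq V, uniq c -> 3 <= size c -> ~~ cycle (tadj E) c)].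

Definition is_leaf (E : {set {set V}}) (v : V) : bool := tdeg E v <= 1.

(* unrooted phylogenetic tree: leaves are the labels (so bijectively labeled),
   internal vertices have degree at least three *)
Definition is_phylo_tree (VT : {set V}) (E : {set {set V}}) : Prop :=
  is_tree VT E /\ (forall v, v \in VT -> ~~ is_leaf E v -> 3 <= tdeg E v).

(* profile of k trees sharing the vertex type V: a vertex common to two
   distinct trees must be a leaf (= the same label) in both *)
Definition is_profile (k : nat) (VT : 'I_k -> {set V}) (ET : 'I_k -> {set {set V}}) : Prop :=
  (forall i, is_phylo_tree (VT i) (ET i)) /\
  (forall i j v, i != j -> v \in VT i -> v \in VT j -> is_leaf (ET i) v && is_leaf (ET j) v).

Definition display_vertices (k : nat) (VT : 'I_k -> {set V}) : {set V} :=
  \bigcup_(i < k) VT i.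
Definition display_edges (k : nat) (ET : 'I_k -> {set {set V}}) : {set {set V}} :=
  \bigcup_(i < k) ET i.

Definition lgadj : rel {set V} := [rel e f | (e != f) && (e :&: f != set0)].
End Trees.

From mathcomp Require Import all_boot.
Set Implicit Arguments.
Unset Strict Implicit.
Unset Printing Implicit Defensive.

(* Let F be a minimal a-b separator of the line graph and let A, B be the
   components of a and b after removing F.  Minimality gives every f in F a
   neighbour in A and one in B.  A further component C would, by connectivity
   of the line graph, also have a neighbour c of some f = {u, v} in F; but
   then two of c and the neighbours of f in A and B contain the same endpoint
   of f, so they are adjacent and two distinct components would merge. *)

Section Restriction.
Variables (T : finType) (r : rel T).

Lemma restr_sym (S : {set T}) : symmetric r -> symmetric (restr S r).
Proof. by move=> r_sym x y; rewrite /restr /= r_sym andbCA. Qed.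

Lemma connect_restr_sym (S : {set T}) x y : symmetric r ->
  connect (restr S r) x y = connect (restr S r) y x.
Proof. by move=> r_sym; apply/sym_connect_sym/restr_sym. Qed.

Lemma connect_restr_mem (S : {set T}) x y :
  connect (restr S r) x y -> x \in S -> y \in S.
Proof.
case/connectP=> p; case/lastP: p => [_ -> //|p z].
by rewrite rcons_path last_rcons => /andP[_ /and3P[_ zS _]] ->.
Qed.

Lemma connect_restr_exit (S D : {set T}) x y :
  S \subset D -> x \in S -> connect (restr D r) x y ->
  ~~ connect (restr S r) x y ->
  exists c f, [/\ connect (restr S r) x c, f \in D :\: S & r c f].
Proof.
move=> SD + /connectP[p]; elim: p x => [|z p IH] x xS /=.
  by move=> _ ->; rewrite connect0.
rewrite {1}/restr /= => /andP[/and3P[_ zD xz] zp] yE nxy.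
have [zS|zNS] := boolP (z \in S); last first.
  by exists x, z; rewrite !inE zNS zD xz connect0.
have xz_S : connect (restr S r) x z by apply: connect1; rewrite /restr /= xS zS.
have [|c [f [zc fDS cf]]] := IH z zS zp yE.
  by apply: contra nxy; apply: connect_trans.
by exists c, f; split=> //; apply: connect_trans zc.
Qed.

Lemma card_components_two (S : {set T}) a b : symmetric r ->
  a \in S -> b \in S -> ~~ connect (restr S r) a b ->
  (forall x, x \in S -> connect (restr S r) x a || connect (restr S r) x b) ->
  #|components S r| = 2.
Proof.
move=> r_sym aS bS nab sides.
have component_eq x y : connect (restr S r) x y ->
    [set z in S | connect (restr S r) y z] = [set z in S | connect (restr S r) x z].
  move=> xy; apply/setP=> z; rewrite !inE.
  by rewrite (same_connect (sym_connect_sym (restr_sym S r_sym)) xy).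
set A := [set z in S | connect (restr S r) a z].
set B := [set z in S | connect (restr S r) b z].
have -> : components S r = [set A; B].
  apply/setP=> C; rewrite in_set2; apply/imsetP/idP.
    case=> x xS ->; case/orP: (sides x xS) => /component_eq <-.
      by rewrite eqxx.
    by rewrite eqxx orbT.
  by case/orP=> /eqP ->; [exists a | exists b].
have AB : A != B.
  apply: contraNneq nab => AB.
  have : b \in B by rewrite inE bS connect0.
  by rewrite -AB inE => /andP[].
by rewrite cards2 AB.
Qed.

End Restriction.

Section MinimalSeparators.
Variables (T : finType) (r : rel T).

(* Put f back: F :\ f no longer separates, so an a-b path of D :\: (F :\ f)
   must leave the component of a through f. *)
Lemma min_ab_separator_neighbour (D F : {set T}) a b f :
  is_min_ab_separator D r a b F -> f \in F ->
  exists2 g, connect (restr (D :\: F) r) a g & r g f.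
Proof.
case=> [[FD aDF bDF nab] Fmin] fF.
have notinFf z : z \in D :\: F -> z \in D :\: (F :\ f).
  by rewrite !inE => /andP[/negbTE -> ->]; rewrite andbF.
have ab_Ff : connect (restr (D :\: (F :\ f)) r) a b.
  apply/negPn/negP => nab_Ff; apply: (Fmin (F :\ f)); first exact: properD1.
  by split; rewrite ?notinFf //; apply: subset_trans (subD1set F f) FD.
have DF_sub : D :\: F \subset D :\: (F :\ f) by apply/subsetP.
have [c [g [ac gDF cg]]] := connect_restr_exit DF_sub aDF ab_Ff nab.
have /eqP <- : g == f.
  by move: gDF; rewrite !inE; case: (g == f); case: (g \in F); case: (g \in D).
by exists c.
Qed.

Hypothesis r_sym : symmetric r.

Lemma min_ab_separator_sym (D F : {set T}) a b :
  is_min_ab_separator D r a b F -> is_min_ab_separator D r b a F.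
Proof.
have sep_sym a' b' U : is_ab_separator D r a' b' U -> is_ab_separator D r b' a' U.
  by case=> UD aDU bDU nab; split=> //; rewrite connect_restr_sym.
by case=> /sep_sym sepF Fmin; split=> // U' /Fmin nsep /sep_sym.
Qed.

End MinimalSeparators.

Section LineGraph.
Variable V : finType.
Implicit Types (S E : {set {set V}}) (c e g : {set V}) (u v w : V).

Lemma lgadj_sym : symmetric (@lgadj V).
Proof. by move=> e g; rewrite /lgadj /= eq_sym setIC. Qed.

Lemma connect_lgadj_common S e g w :
  e \in S -> g \in S -> w \in e -> w \in g -> connect (restr S (@lgadj V)) e g.
Proof.
move=> eS gS we wg; have [-> | eg] := eqVneq e g; first exact: connect0.
apply: connect1; rewrite /restr /lgadj /= eS gS eg /=.
by apply/set0Pn; exists w; rewrite inE we wg.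
Qed.

Lemma lgadj_pair c u v : lgadj c [set u; v] -> (u \in c) || (v \in c).
Proof.
by case/andP=> _ /set0Pn[w]; rewrite !inE => /andP[wc /orP[] /eqP <-]; rewrite wc ?orbT.
Qed.

(* Three neighbours of an edge {u, v} cannot avoid each other: two of them
   contain the same endpoint. *)
Lemma lgadj_pair_pigeonhole S u v c1 c2 c3 :
  c1 \in S -> c2 \in S -> c3 \in S ->
  lgadj c1 [set u; v] -> lgadj c2 [set u; v] -> lgadj c3 [set u; v] ->
  [|| connect (restr S (@lgadj V)) c1 c2, connect (restr S (@lgadj V)) c1 c3
    | connect (restr S (@lgadj V)) c2 c3].
Proof.
move=> c1S c2S c3S /lgadj_pair/orP[] w1 /lgadj_pair/orP[] w2 /lgadj_pair/orP[] w3;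
  first [ by rewrite (connect_lgadj_common c1S c2S w1 w2)
        | by rewrite (connect_lgadj_common c1S c3S w1 w3) orbT
        | by rewrite (connect_lgadj_common c2S c3S w2 w3) !orbT ].
Qed.

Definition edges_on (VD : {set V}) E : Prop :=
  forall e, e \in E -> exists u v, [/\ u \in VD, v \in VD, u != v & e = [set u; v]].

Lemma display_edges_on k (VT : 'I_k -> {set V}) (ET : 'I_k -> {set {set V}}) :
  is_profile VT ET -> edges_on (display_vertices VT) (display_edges ET).
Proof.
move=> [VTphylo _] e /bigcupP[i _ eEi].
have [[_ edges_i _ _] _] := VTphylo i.
have [u [v [uVi vVi uv ->]]] := edges_i e eEi.
by exists u, v; split=> //; apply/bigcupP; exists i.
Qed.

Lemma connect_tadj_lift (VD : {set V}) E u v e :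
  connect (restr VD (tadj E)) u v -> e \in E -> u \in e ->
  exists2 e', e' \in E & (v \in e') && connect (restr E (@lgadj V)) e e'.
Proof.
case/connectP=> p; elim: p u e => [|w p IH] u e /=.
  by move=> _ -> eE ue; exists e; rewrite ?ue ?connect0.
rewrite {1}/restr /= => /andP[/and3P[_ _ /andP[_ uwE]] wp] vE eE ue.
have [|e' e'E /andP[ve' uw_e']] := IH w [set u; w] wp vE uwE.
  by rewrite !inE eqxx orbT.
exists e' => //; rewrite ve'; apply: connect_trans uw_e'.
by apply: (connect_lgadj_common eE uwE ue); rewrite !inE eqxx.
Qed.

Lemma line_graph_gconnected (VD : {set V}) E :
  edges_on VD E -> gconnected VD (tadj E) -> gconnected E (@lgadj V).
Proof.
move=> Eon VDconn e1 e2 e1E e2E.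
have [u1 [v1 [u1V _ _ e1_uv]]] := Eon e1 e1E.
have [u2 [v2 [u2V _ _ e2_uv]]] := Eon e2 e2E.
have [|e' e'E /andP[u2e' e1e']] := connect_tadj_lift (VDconn _ _ u1V u2V) e1E.
  by rewrite e1_uv !inE eqxx.
apply: connect_trans e1e' (connect_lgadj_common e'E e2E u2e' _).
by rewrite e2_uv !inE eqxx.
Qed.

Lemma line_graph_min_separator_sides (VD : {set V}) E F a b x :
  edges_on VD E -> gconnected E (@lgadj V) ->
  is_min_ab_separator E (@lgadj V) a b F -> x \in E :\: F ->
  connect (restr (E :\: F) (@lgadj V)) x a || connect (restr (E :\: F) (@lgadj V)) x b.
Proof.
move=> Eon Econn Fmin xEF; have [[FE aEF bEF nab] _] := Fmin.
have conn_sym y z : connect (restr (E :\: F) (@lgadj V)) y z ->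
    connect (restr (E :\: F) (@lgadj V)) z y.
  by rewrite connect_restr_sym //; apply: lgadj_sym.
apply/negPn/negP => /norP[nxa nxb].
have xE : x \in E by move: xEF; rewrite inE => /andP[].
have aE : a \in E by move: aEF; rewrite inE => /andP[].
have [c [f [xc fF cf]]] := connect_restr_exit (subsetDl E F) xEF (Econn x a xE aE) nxa.
have {}fF : f \in F by move: fF; rewrite !inE; case: (f \in F); case: (f \in E).
have [g1 ag1 g1f] := min_ab_separator_neighbour Fmin fF.
have [g2 bg2 g2f] :=
  min_ab_separator_neighbour (min_ab_separator_sym lgadj_sym Fmin) fF.
have [u [v [_ _ _ f_uv]]] := Eon f (subsetP FE f fF).
rewrite f_uv in cf g1f g2f.
have := lgadj_pair_pigeonhole (connect_restr_mem xc xEF) (connect_restr_mem ag1 aEF)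
  (connect_restr_mem bg2 bEF) cf g1f g2f.
case/or3P=> [cg1 | cg2 | g1g2].
- by case/negP: nxa; apply: connect_trans xc (connect_trans cg1 (conn_sym _ _ ag1)).
- by case/negP: nxb; apply: connect_trans xc (connect_trans cg2 (conn_sym _ _ bg2)).
- by case/negP: nab; apply: connect_trans ag1 (connect_trans g1g2 (conn_sym _ _ bg2)).
Qed.

End LineGraph.

Theorem lemma4 (V : finType) (k : nat) (VT : 'I_k -> {set V})
    (ET : 'I_k -> {set {set V}}) :
  is_profile VT ET ->
  gconnected (display_vertices VT) (tadj (display_edges ET)) ->
  forall F : {set {set V}},
    is_min_separator (display_edges ET) (@lgadj V) F ->
    #|components (display_edges ET :\: F) (@lgadj V)| = 2.
Proof.
move=> profile Gconn F [a [b [_ _ _ _ Fmin]]].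
have Eon := display_edges_on profile.
have LGconn := line_graph_gconnected Eon Gconn.
have [[_ aEF bEF nab] _] := Fmin.
apply: (card_components_two (@lgadj_sym V) aEF bEF nab) => x.
exact: line_graph_min_separator_sides Eon LGconn Fmin.
Qed.
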